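(* Let $$A= \begin{pmatrix} 1& -2& 2\\ 2&-1& 2\\ 2&-2& 3 \end{pmatrix},\quad B= \begin{pmatrix} 1& 2& 2\\ 2&1& 2\\ 2&2& 3 \end{pmatrix},\quad C= \begin{pmatrix} -1& 2& 2\\ -2&1& 2\\ -2&2& 3 \end{pmatrix},$$ and let $P=(x,y,z)$ be a primitive Pythagorean triple. Then the points of $\mathbb{R}^3$ with coordinates $AP^\top$, $BP^\top$, $CP^\top$ are the vertices of a triangle of area $2xy\sqrt{17}$.
   Context: A primitive Pythagorean triple is a triple $(x,y,z)$ of positive integers with $x^2+y^2=z^2$, $\gcd(x,y)=1$ and $x$ odd. Triples are regarded as row vectors and $\top$ denotes transpose; $\mathbb{R}^3$ carries the Euclidean metric. *)

From HB Require Import structures.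
From mathcomp Require Import all_boot all_order all_algebra.
From mathcomp Require Import reals.
Set Implicit Arguments. Unset Strict Implicit. Unset Printing Implicit Defensive.
Import Order.TTheory GRing.Theory Num.Theory.
Local Open Scope ring_scope.

Definition prim_pyth (x y z : nat) : Prop :=
  [/\ (0 < x)%N, (0 < y)%N, (0 < z)%N, (x ^ 2 + y ^ 2 = z ^ 2)%N
      & coprime x y /\ odd x].

Definition mx3 (R : realType) (a : seq (seq int)) : 'M[R]_3 :=
  \matrix_(i < 3, j < 3) ((nth [::] a i)`_j)%:~R.

Definition matA (R : realType) : 'M[R]_3 :=
  mx3 R [:: [:: 1; -2; 2]; [:: 2; -1; 2]; [:: 2; -2; 3]].
Definition matB (R : realType) : 'M[R]_3 :=
  mx3 R [:: [:: 1; 2; 2]; [:: 2; 1; 2]; [:: 2; 2; 3]].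
Definition matC (R : realType) : 'M[R]_3 :=
  mx3 R [:: [:: -1; 2; 2]; [:: -2; 1; 2]; [:: -2; 2; 3]].

Definition ptcol (R : realType) (x y z : nat) : 'cV[R]_3 :=
  \col_(i < 3) ([:: x%:R; y%:R; z%:R]`_i).

Definition cross (R : realType) (u v : 'cV[R]_3) : 'cV[R]_3 :=
  \col_(i < 3)
    [:: u 1 0 * v 2 0 - u 2 0 * v 1 0;
        u 2 0 * v 0 0 - u 0 0 * v 2 0;
        u 0 0 * v 1 0 - u 1 0 * v 0 0]`_i.

Definition enorm (R : realType) (u : 'cV[R]_3) : R :=
  Num.sqrt (\sum_(i < 3) u i 0 ^+ 2).

(* three points are the vertices of a (non-degenerate) triangle iff they
   are not collinear *)
Definition is_triangle (R : realType) (p q r : 'cV[R]_3) : Prop :=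
  cross (q - p) (r - p) != 0.

Definition tri_area (R : realType) (p q r : 'cV[R]_3) : R :=
  enorm (cross (q - p) (r - p)) / 2.

Arguments mx3 R a : clear implicits.
Arguments matA R : clear implicits.
Arguments matB R : clear implicits.
Arguments matC R : clear implicits.
Arguments ptcol R x y z : clear implicits.

(* Both edge vectors issuing from A P lie in the plane spanned by
   u = (2,1,2) and v = (1,2,2), independently of z: B P - A P = 2y u and
   C P - A P = 2y u - 2x v.  Hence their cross product is -4xy (u x v), with
   u x v = (-2,-2,3) of length sqrt 17, so the area is 4xy sqrt 17 / 2. *)
From HB Require Import structures.
From mathcomp Require Import all_boot all_order all_algebra.
From mathcomp Require Import reals.
From mathcomp Require Import ring.
Import Order.TTheory GRing.Theory Num.Theory.
Local Open Scope ring_scope.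

Definition col3 {V : nmodType} (a b c : V) : 'cV[V]_3 :=
  \col_(i < 3) [:: a; b; c]`_i.

Lemma colP3 (T : Type) (u v : 'cV[T]_3) :
  u 0 0 = v 0 0 -> u 1 0 = v 1 0 -> u 2 0 = v 2 0 -> u = v.
Proof.
move=> e0 e1 e2; apply/colP => -[[|[|[|//]]] i3];
  [have -> : Ordinal i3 = 0 | have -> : Ordinal i3 = 1 | have -> : Ordinal i3 = 2];
  by [apply: val_inj |].
Qed.

Section Vectors3.
Variable R : realType.
Implicit Types (a : R) (u v w : 'cV[R]_3).

Lemma mul_mx3_col3 (a11 a12 a13 a21 a22 a23 a31 a32 a33 : int) (p q r : R) :
  mx3 R [:: [:: a11; a12; a13]; [:: a21; a22; a23]; [:: a31; a32; a33]]
    *m col3 p q r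
  = col3 (a11%:~R * p + a12%:~R * q + a13%:~R * r)
         (a21%:~R * p + a22%:~R * q + a23%:~R * r)
         (a31%:~R * p + a32%:~R * q + a33%:~R * r).
Proof.
by apply/colP3; rewrite !mxE !big_ord_recl big_ord0 !mxE /= addr0 addrA.
Qed.

Lemma cross_col3 (a b c d e f : R) :
  cross (col3 a b c) (col3 d e f)
  = col3 (b * f - c * e) (c * d - a * f) (a * e - b * d).
Proof. by apply/colP3; rewrite !mxE. Qed.

Lemma crossZl a u v : cross (a *: u) v = a *: cross u v.
Proof. by apply/colP3; rewrite !mxE /=; ring. Qed.

Lemma crossZr a u v : cross u (a *: v) = a *: cross u v.
Proof. by apply/colP3; rewrite !mxE /=; ring. Qed.

Lemma crossBr u v w : cross u (v - w) = cross u v - cross u w.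
Proof. by apply/colP3; rewrite !mxE /=; ring. Qed.

Lemma crossvv u : cross u u = 0.
Proof. by apply/colP3; rewrite !mxE /=; ring. Qed.

Lemma enormZ a u : enorm (a *: u) = `|a| * enorm u.
Proof.
rewrite /enorm; under eq_bigr do rewrite mxE exprMn.
by rewrite -mulr_sumr sqrtrM ?sqr_ge0 // sqrtr_sqr.
Qed.

Lemma enorm_col3 (a b c : R) :
  enorm (col3 a b c) = Num.sqrt (a ^+ 2 + b ^+ 2 + c ^+ 2).
Proof. by rewrite /enorm !big_ord_recl big_ord0 !mxE /= addr0 addrA. Qed.

End Vectors3.

Theorem mainTheorem12 (R : realType) (x y z : nat) :
  prim_pyth x y z ->
  is_triangle (matA R *m ptcol R x y z) (matB R *m ptcol R x y z)
              (matC R *m ptcol R x y z) /\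
  tri_area (matA R *m ptcol R x y z) (matB R *m ptcol R x y z)
           (matC R *m ptcol R x y z)
    = 2 * x%:R * y%:R * Num.sqrt 17.
Proof.
case=> x_gt0 y_gt0 _ _ _.
set P := ptcol R x y z; set X : R := x%:R; set Y : R := y%:R.
set u : 'cV[R]_3 := col3 2 1 2; set v : 'cV[R]_3 := col3 1 2 2.
have P_col3 : P = col3 X Y z%:R by [].
have edgeAB : matB R *m P - matA R *m P = (2 * Y) *: u.
  by rewrite P_col3 !mul_mx3_col3; apply/colP3; rewrite !mxE /=; ring.
have edgeAC : matC R *m P - matA R *m P = (2 * Y) *: u - (2 * X) *: v.
  by rewrite P_col3 !mul_mx3_col3; apply/colP3; rewrite !mxE /=; ring.
have uxv : cross u v = col3 (-2) (-2) 3 by rewrite cross_col3; congr col3; ring.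
have crossE : cross (matB R *m P - matA R *m P) (matC R *m P - matA R *m P)
              = - (4 * (X * Y)) *: col3 (-2) (-2) 3.
  rewrite edgeAB edgeAC crossZl crossBr !crossZr crossvv uxv scaler0 sub0r.
  by rewrite scalerN scalerA -scaleNr; congr (_ *: _); ring.
have XY_gt0 : 0 < X * Y by rewrite mulr_gt0 ?ltr0n.
rewrite /is_triangle /tri_area crossE; split.
  rewrite scaler_eq0 negb_or oppr_eq0 mulf_neq0 ?pnatr_eq0 ?gt_eqF //=.
  by apply/eqP => /colP/(_ 2); rewrite !mxE /= => /eqP; rewrite pnatr_eq0.
rewrite enormZ enorm_col3 normrN ger0_norm; last by rewrite mulr_ge0 // ltW.
have -> : (-2) ^+ 2 + (-2) ^+ 2 + 3 ^+ 2 = 17 :> R by ring.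
by rewrite mulrA; field.
Qed.
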